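(* Let $\mathcal{V}$ be a finite set of $n$ nodes, each carrying a label in $\{1,\dots,h\}$, and for $s\in[h]$ let $\mathcal{C}_s\subseteq\mathcal{V}$ be the set of nodes with label $s$, so that $\mathcal{V}=\dot{\bigcup}_{s\in[h]}\mathcal{C}_s$. Let $\mathbf{F}\in\{0,1\}^{n\times h}$ be the label-membership indicator matrix, $F_{i,s}=1$ if node $i$ has label $s$ and $F_{i,s}=0$ otherwise. Let $v\ge1$ and define $\widetilde{\mathbf{M}}\in\mathbb{R}^{h\times v}$ by $\widetilde{M}_{s,j}=\frac{|\mathcal{C}_s|}{\sqrt{nv}}$. For a partition $\mathcal{V}=\dot{\bigcup}_{j\in[v]}\mathcal{V}_j$ into nonempty parts, let $\mathbf{H}\in\mathbb{R}^{n\times v}$ be its normalized group-membership indicator matrix, $H_{ij}=1/\sqrt{|\mathcal{V}_j|}$ if $i\in\mathcal{V}_j$ and $H_{ij}=0$ otherwise. Then the partition is fair and balanced if and only if $\mathbf{F}^{\intercal}\mathbf{H}=\widetilde{\mathbf{M}}$.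
   Context: A partition $\mathcal{V}=\dot{\bigcup}_{j\in[v]}\mathcal{V}_j$ is called balanced if $|\mathcal{V}_j|=n/v$ for every $j\in[v]$, and fair if for every $j\in[v]$ and $s\in[h]$ the proportion of label $s$ in the part equals its proportion in the whole set: $\frac{|\mathcal{C}_s\cap\mathcal{V}_j|}{|\mathcal{V}_j|}=\frac{|\mathcal{C}_s|}{n}$. *)

From mathcomp Require Import all_boot all_order all_algebra.
Set Implicit Arguments. Unset Strict Implicit. Unset Printing Implicit Defensive.
Import Order.TTheory GRing.Theory Num.Theory.
Local Open Scope ring_scope.

(* Nodes are 'I_n, labels are 'I_h (label s <-> s+1 in the paper),
   a partition into v parts is given by part : 'I_n -> 'I_v. *)

Definition labclass n h (lab : 'I_n -> 'I_h) (s : 'I_h) : {set 'I_n} :=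
  [set i | lab i == s].

Definition block n v (part : 'I_n -> 'I_v) (j : 'I_v) : {set 'I_n} :=
  [set i | part i == j].

Definition balanced n v (part : 'I_n -> 'I_v) : Prop :=
  forall j, (#|block part j|%:Q = n%:Q / v%:Q)%R.

Definition fair n h v (lab : 'I_n -> 'I_h) (part : 'I_n -> 'I_v) : Prop :=
  forall j s, (#|labclass lab s :&: block part j|%:Q / #|block part j|%:Q
               = #|labclass lab s|%:Q / n%:Q)%R.

Definition Fmx (R : rcfType) n h (lab : 'I_n -> 'I_h) : 'M[R]_(n, h) :=
  \matrix_(i, s) (lab i == s)%:R.

Definition Hmx (R : rcfType) n v (part : 'I_n -> 'I_v) : 'M[R]_(n, v) :=
  \matrix_(i, j) (if part i == j then (Num.sqrt (#|block part j|%:R))^-1 else 0).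

Definition Mtilde (R : rcfType) n h v (lab : 'I_n -> 'I_h) : 'M[R]_(h, v) :=
  \matrix_(s, j) (#|labclass lab s|%:R / Num.sqrt ((n * v)%N%:R)).

From mathcomp Require Import all_boot all_order all_algebra.
Import Order.TTheory GRing.Theory Num.Theory.
Set Implicit Arguments. Unset Strict Implicit. Unset Printing Implicit Defensive.
Local Open Scope ring_scope.

(* Entry (s, j) of F^T H is |C_s ∩ V_j| / sqrt |V_j|. Summing column j over s
   gives sqrt |V_j|, while column j of M~ sums to n / sqrt (n v); so the matrix
   identity forces |V_j| v = n, i.e. balance. Once balanced, sqrt (n v) =
   v sqrt |V_j| and the entrywise identity reads |C_s ∩ V_j| v = |C_s|, which
   is fairness. *)

Lemma sum_card_labclassI n h (lab : 'I_n -> 'I_h) (A : {set 'I_n}) :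
  (\sum_s #|labclass lab s :&: A| = #|A|)%N.
Proof.
rewrite -sum1_card (partition_big lab predT) //=.
apply: eq_bigr => s _; rewrite -sum1_card; apply: eq_bigl => i.
by rewrite !inE andbC.
Qed.

Lemma sum_card_labclass n h (lab : 'I_n -> 'I_h) :
  (\sum_s #|labclass lab s| = n)%N.
Proof.
rewrite -[RHS]card_ord -cardsT -(sum_card_labclassI lab).
by apply: eq_bigr => s _; rewrite setIT.
Qed.

Lemma eq_natr_div (F : numFieldType) (a b c d : nat) : (0 < b)%N -> (0 < d)%N ->
  (a%:R / b%:R = c%:R / d%:R :> F) <-> (a * d = c * b)%N.
Proof.
move=> b_gt0 d_gt0.
have eqE : (a%:R / b%:R == c%:R / d%:R :> F) = (a * d == c * b)%N.
  by rewrite eqr_div ?pnatr_eq0 -?lt0n // -!natrM eqr_nat.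
by split=> /eqP; [rewrite eqE | rewrite -eqE] => /eqP.
Qed.

Section FairBalanced.
Variables (n h v : nat) (lab : 'I_n -> 'I_h) (part : 'I_n -> 'I_v).

Lemma balancedE : (0 < v)%N ->
  balanced part <-> forall j, (#|block part j| * v = n)%N.
Proof.
move=> v_gt0.
have balE j : #|block part j|%:Q = n%:Q / v%:Q <-> (#|block part j| * v = n)%N.
  rewrite -[#|_|%:Q]divr1.
  by have := @eq_natr_div rat #|block part j| 1 n v isT v_gt0; rewrite muln1.
by split=> bal j; apply/balE/bal.
Qed.

Lemma fairE : (0 < n)%N -> (forall j, 0 < #|block part j|)%N ->
  fair lab part <-> forall j s,
    (#|labclass lab s :&: block part j| * n = #|labclass lab s| * #|block part j|)%N.
Proof.
move=> n_gt0 b_gt0.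
have fairE j s := @eq_natr_div rat #|labclass lab s :&: block part j|
  #|block part j| #|labclass lab s| n (b_gt0 j) n_gt0.
by split=> fr j s; apply/fairE/fr.
Qed.

Variable R : rcfType.

Lemma trFmx_mul_HmxE s j :
  ((Fmx R lab)^T *m Hmx R part) s j =
  #|labclass lab s :&: block part j|%:R / Num.sqrt (#|block part j|%:R).
Proof.
rewrite !mxE (bigID (mem (labclass lab s :&: block part j))) /=.
rewrite [X in _ + X]big1 ?addr0; last first.
  by move=> i; rewrite !inE !mxE => /nandP[]/negbTE->; rewrite ?mul0r ?mulr0.
rewrite (eq_bigr (fun _ => (Num.sqrt (#|block part j|%:R))^-1)) ?sumr_const ?mulr_natl //.
by move=> i; rewrite !inE !mxE => /andP[/eqP-> /eqP->]; rewrite !eqxx mul1r.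
Qed.

Lemma sum_col_trFmx_mul_Hmx j :
  \sum_s ((Fmx R lab)^T *m Hmx R part) s j =
  #|block part j|%:R / Num.sqrt (#|block part j|%:R).
Proof.
under eq_bigr do rewrite trFmx_mul_HmxE.
by rewrite -mulr_suml -natr_sum sum_card_labclassI.
Qed.

Lemma sum_col_Mtilde j :
  \sum_s Mtilde R v lab s j = n%:R / Num.sqrt ((n * v)%N%:R).
Proof.
under eq_bigr do rewrite mxE.
by rewrite -mulr_suml -natr_sum sum_card_labclass.
Qed.

End FairBalanced.

Lemma sqrt_nat_balanced (R : rcfType) (b n v : nat) : (b * v = n)%N ->
  Num.sqrt ((n * v)%N%:R : R) = v%:R * Num.sqrt b%:R.
Proof.
move=> <-; rewrite -mulnA natrM sqrtrM ?ler0n // natrM -expr2 sqrtr_sqr.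
by rewrite normr_nat mulrC.
Qed.

Lemma eq_div_sqrt_balanced (R : rcfType) (c C b n v : nat) :
  (0 < b)%N -> (0 < v)%N -> (b * v = n)%N ->
  (c%:R / Num.sqrt b%:R = C%:R / Num.sqrt ((n * v)%N%:R) :> R) <-> (c * n = C * b)%N.
Proof.
move=> b_gt0 v_gt0 bv; rewrite (sqrt_nat_balanced R bv) -bv.
have sb_neq0 : Num.sqrt (b%:R : R) != 0 by rewrite gt_eqF // sqrtr_gt0 ltr0n.
have v_neq0 : (v%:R : R) != 0 by rewrite pnatr_eq0 -lt0n.
have eqE : (c%:R / Num.sqrt b%:R == C%:R / (v%:R * Num.sqrt b%:R) :> R) =
           (c * (b * v) == C * b)%N.
  rewrite eqr_div ?mulf_neq0 // mulrA (inj_eq (mulIf sb_neq0)) -natrM eqr_nat.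
  by rewrite mulnCA [(C * b)%N]mulnC eqn_pmul2l.
by split=> /eqP; [rewrite eqE | rewrite -eqE] => /eqP.
Qed.

Lemma balanced_of_sqrt (R : rcfType) (b n v : nat) :
  (0 < b)%N -> (0 < n)%N -> (0 < v)%N ->
  (b%:R / Num.sqrt b%:R = n%:R / Num.sqrt ((n * v)%N%:R) :> R) -> (b * v = n)%N.
Proof.
move=> b_gt0 n_gt0 v_gt0; rewrite -{1}[b%:R]sqr_sqrtr ?ler0n // expr2.
rewrite mulfK ?gt_eqF ?sqrtr_gt0 ?ltr0n // => /(congr1 (fun x => x ^+ 2)).
rewrite expr_div_n !sqr_sqrtr ?ler0n // => /eqP.
rewrite -[X in X == _]divr1 eqr_div ?oner_eq0 ?pnatr_eq0 -?lt0n ?muln_gt0 ?n_gt0 //.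
rewrite mulr1 -natrX -!natrM eqr_nat.
by rewrite mulnCA -[(n ^ 2)%N]mulnn eqn_pmul2l // => /eqP.
Qed.

Theorem theorem2 (R : rcfType) (n h v : nat) (lab : 'I_n -> 'I_h)
  (part : 'I_n -> 'I_v) (hv : (1 <= v)%N)
  (hne : forall j : 'I_v, exists i : 'I_n, part i = j) :
  (fair lab part /\ balanced part) <->
  (Fmx R lab)^T *m Hmx R part = Mtilde R v lab.
Proof.
have b_gt0 j : (0 < #|block part j|)%N.
  by have [i pi] := hne j; apply/card_gt0P; exists i; rewrite inE pi.
have n_gt0 : (0 < n)%N by rewrite -[n]card_ord (leq_trans (b_gt0 (Ordinal hv))) ?max_card.
have entryE (bal : forall j, (#|block part j| * v = n)%N) s j :
    ((Fmx R lab)^T *m Hmx R part) s j = Mtilde R v lab s j <->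
    (#|labclass lab s :&: block part j| * n = #|labclass lab s| * #|block part j|)%N.
  by rewrite trFmx_mul_HmxE mxE; apply: eq_div_sqrt_balanced (b_gt0 j) hv (bal j).
split=> [[/(fairE lab n_gt0 b_gt0) fr /(balancedE part hv) bal] | FH_M].
  by apply/matrixP => s j; apply/(entryE bal).
have bal j : (#|block part j| * v = n)%N.
  have := congr1 (fun A : 'M[R]_(h, v) => \sum_s A s j) FH_M.
  rewrite sum_col_trFmx_mul_Hmx sum_col_Mtilde.
  exact: balanced_of_sqrt (b_gt0 j) n_gt0 hv.
split; last exact/(balancedE part hv).
by apply/(fairE lab n_gt0 b_gt0) => j s; apply/(entryE bal); rewrite FH_M.
Qed.
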